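(* For all integers $r,k\ge2$, the Milnor number $M_k^r=rN_k^r-N_{k+1}^r$ is positive (equivalently $N_{k+1}^r<rN_k^r$), except when $r=2$ and $k\in\{2,4,6\}$.
   Context: $N_k^r=\frac1k\sum_{d\mid k}\mu(d)\,r^{k/d}$ (Witt's formula for the number of basic commutators of length $k$ in $r$ variables), where $\mu$ is the Möbius function: $\mu(d)=1$ if $d=1$ or $d$ is a product of an even number of distinct primes, $\mu(d)=-1$ if $d$ is a product of an odd number of distinct primes, and $\mu(d)=0$ otherwise. *)

From mathcomp Require Import all_boot all_order all_algebra.
Set Implicit Arguments. Unset Strict Implicit. Unset Printing Implicit Defensive.
Import Order.TTheory GRing.Theory Num.Theory.
Local Open Scope ring_scope.

Definition moebius (d : nat) : int :=
  if [forall p : 'I_d.+1, prime p ==> ~~ (p * p %| d)%N]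
  then (-1) ^+ size (primes d) else 0.

Definition witt (r k : nat) : rat :=
  (k%:R)^-1 * \sum_(d <- divisors k) (moebius d)%:~R * (r ^ (k %/ d))%:R.

Definition milnor (r k : nat) : rat := r%:R * witt r k - witt r k.+1.

From mathcomp Require Import all_boot all_order all_algebra.
From mathcomp Require Import zify ring.
Import Order.TTheory GRing.Theory Num.Theory.
Local Open Scope ring_scope.

(* Writing A_k := k N_k^r = sum_{d | k} mu(d) r^(k/d), the term d = 1 gives r^k
   and the others are distinct powers r^(k/d) with k/d <= k/2, so
   |A_k - r^k| <= r + ... + r^(k/2) < r^(k/2 + 1) / (r - 1).  Then
   M_k^r > 0 iff k A_(k+1) < (k+1) r A_k, which these estimates guarantee as
   soon as 2k + 1 <= (r - 1) r^(ceil(k/2) - 1); an exponential beats a linear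
   function, so this fails only for r <= 5 and k <= 10, and the finitely many
   remaining pairs are checked by computation. *)

(* k N_k^r, the number of aperiodic words of length k over r letters *)
Definition witt_numer (r k : nat) : int :=
  \sum_(d <- divisors k) moebius d * (r ^ (k %/ d))%N%:Z.

Definition powsum (r m : nat) : nat := (\sum_(1 <= j < m.+1) r ^ j)%N.

Definition main_term_dominates (r k : nat) : bool :=
  (2 * k + 1 <= r.-1 * r ^ (uphalf k).-1)%N.

Lemma moebius1 : moebius 1 = 1.
Proof. by rewrite /moebius; case: forallP => // -[] [[|[|]] ?]. Qed.

Lemma norm_moebius_le1 d : `|moebius d| <= 1.
Proof.
by rewrite /moebius; case: ifP => _; rewrite ?normrX ?normrN1 ?expr1n ?normr0.
Qed.

Lemma wittE r k : witt r k = (k%:R)^-1 * (witt_numer r k)%:~R.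
Proof.
by rewrite /witt rmorph_sum; congr (_ * _); apply: eq_bigr => d _; rewrite rmorphM.
Qed.

Lemma milnor_gt0_of_numer r k : (0 < k)%N ->
  k%:Z * witt_numer r k.+1 < (k.+1 * r)%N%:Z * witt_numer r k -> 0 < milnor r k.
Proof.
move=> k_gt0; rewrite -(ltr_int rat) !intrM -!pmulrn -subr_gt0.
rewrite /milnor !wittE.
have k_neq0 : (k%:R : rat) != 0 by rewrite pnatr_eq0 -lt0n.
have k1_neq0 : (k.+1%:R : rat) != 0 by rewrite pnatr_eq0.
set a := (witt_numer r k)%:~R; set b := (witt_numer r k.+1)%:~R.
have -> : r%:R * ((k%:R)^-1 * a) - (k.+1%:R)^-1 * b =
   (k.+1%:R * r%:R * a - k%:R * b) / (k%:R * k.+1%:R) :> rat.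
  by field; rewrite addrC natr1 k_neq0 k1_neq0.
by rewrite natrM => ?; rewrite divr_gt0 // mulr_gt0 // ltr0n.
Qed.

Lemma mul_predn_powsum r m : (0 < r)%N -> (r.-1 * powsum r m + r = r ^ m.+1)%N.
Proof.
move=> r_gt0; elim: m => [|m IH]; first by rewrite /powsum big_geq ?muln0.
rewrite /powsum big_nat_recr //= mulnDr -addnAC IH.
by rewrite -mulSn prednK // -expnS.
Qed.

Lemma sum_cofactor_powers_le r k : (0 < k)%N ->
  (\sum_(d <- divisors k | d != 1%N) r ^ (k %/ d) <= powsum r k./2)%N.
Proof.
move=> k_gt0; rewrite -big_filter -(big_map (divn k) xpredT (expn r)).
rewrite /powsum /index_iota subSS subn0.
apply: (@uniq_sub_le_big _ addn leq leqnn (fun m n => leq_addr n m)).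
- rewrite map_inj_in_uniq ?filter_uniq ?divisors_uniq //.
  move=> d e; rewrite !mem_filter -!dvdn_divisors // => /andP[_ dk] /andP[_ ek] de.
  have : (k %/ (k %/ d) = k %/ (k %/ e))%N by rewrite de.
  by rewrite !divnA // !mulKn.
- exact: iota_uniq.
- move=> j /mapP[d + ->]; rewrite mem_filter -dvdn_divisors // => /andP[d_neq1 dk].
  have d_gt1 : (1 < d)%N by rewrite ltn_neqAle eq_sym d_neq1 (dvdn_gt0 k_gt0 dk).
  rewrite mem_iota add1n ltnS divn_gt0 ?(dvdn_gt0 k_gt0) //.
  by rewrite dvdn_leq //= -divn2 leq_div2l.
Qed.

Lemma witt_numer_near_pow r k : (0 < k)%N ->
  `|witt_numer r k - (r ^ k)%N%:Z| <= (powsum r k./2)%:Z.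
Proof.
move=> k_gt0; rewrite /witt_numer (bigD1_seq 1%N) ?divisor1 ?divisors_uniq //=.
rewrite moebius1 mul1r divn1 addrC addrK.
apply: le_trans (ler_norm_sum _ _ _) _.
apply: (@le_trans _ _ (\sum_(d <- divisors k | d != 1%N) r ^ (k %/ d))%N%:Z).
  rewrite -natz natr_sum; apply: ler_sum => d _.
  by rewrite normrM natz [`|Posz _|]ger0_norm // ler_piMl ?norm_moebius_le1.
exact: sum_cofactor_powers_le.
Qed.

Lemma powsum_error_lt r a c : (2 <= r)%N -> (c <= a)%N ->
  (2 * (a + c.+1) + 1 <= r.-1 * r ^ c)%N ->
  ((a + c.+1) * powsum r c.+1 + (a + c.+1).+1 * r * powsum r a
     < r ^ (a + c.+1).+1)%N.
Proof.
move=> r_ge2 c_le_a bound; set k := (a + c.+1)%N.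
have r_gt0 : (0 < r)%N by exact: ltnW.
have pr_gt0 : (0 < r.-1)%N by rewrite -ltnS prednK.
have x_le_y : (r ^ c <= r ^ a)%N by rewrite leq_pexp2l.
have sb_le : (r.-1 * powsum r c.+1 <= r * r * r ^ c)%N.
  by rewrite -mulnA -!expnS -mul_predn_powsum ?leq_addr.
have sa_lt : (r.-1 * powsum r a < r * r ^ a)%N.
  by rewrite -expnS -mul_predn_powsum // -addn1 leq_add2l.
rewrite -(ltn_pmul2l pr_gt0) mulnDr mulnCA [X in (_ + X < _)%N]mulnCA.
have -> : (r ^ k.+1 = r * r * r ^ c * r ^ a)%N.
  by rewrite /k -addnS addnC expnD !expnS !mulnA.
apply: (@leq_trans (k * (r * r * r ^ c) + k.+1 * r * (r * r ^ a))).
  by rewrite -addnS leq_add ?leq_mul2l ?sb_le ?orbT // ltn_pmul2l ?muln_gt0.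
apply: (@leq_trans ((k + k.+1) * (r * r * r ^ a))).
  by rewrite mulnDl -!mulnA leq_add2r ?leq_mul2l ?x_le_y ?orbT.
have -> : (r.-1 * (r * r * r ^ c * r ^ a) = r.-1 * r ^ c * (r * r * r ^ a))%N.
  by lia.
by rewrite leq_mul2r; apply/orP; right; lia.
Qed.

Lemma milnor_gt0_of_dominance r k : (2 <= r)%N -> (0 < k)%N ->
  main_term_dominates r k -> 0 < milnor r k.
Proof.
move=> r_ge2 k_gt0 bound; apply: milnor_gt0_of_numer => //.
set a := k./2; set c := (uphalf k).-1.
have uk : uphalf k = c.+1 by rewrite prednK // uphalf_gt0.
have k_eq : k = (a + c.+1)%N.
  by have := odd_double_half k; rewrite -uk uphalf_half /a; lia.
have c_le_a : (c <= a)%N.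
  by rewrite -ltnS -uk uphalf_half /a; case: odd.
have tail_lt : (k * powsum r c.+1 + k.+1 * r * powsum r a < r * r ^ k)%N.
  rewrite -expnS k_eq; apply: powsum_error_lt => //.
  by rewrite -k_eq.
have /ler_normlP[_ hi] := witt_numer_near_pow r k.+1 isT.
have /ler_normlP[lo _] := witt_numer_near_pow r k k_gt0.
rewrite -/a in lo; rewrite -uphalfE uk expnS in hi.
move: (witt_numer r k) (witt_numer r k.+1) (r ^ k)%N lo hi tail_lt.
move=> N0 N1 P lo hi tail_lt.
have h1 : k%:Z * N1 <= k%:Z * ((r * P)%N%:Z + (powsum r c.+1)%:Z).
  by rewrite ler_wpM2l //; lia.
have h2 : (k.+1 * r)%N%:Z * (P%:Z - (powsum r a)%:Z) <= (k.+1 * r)%N%:Z * N0.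
  by rewrite ler_wpM2l //; lia.
nia.
Qed.

Lemma linear_le_exp r c : (2 <= r)%N -> (6 <= r)%N || (5 <= c)%N ->
  (4 * c + 5 <= r.-1 * r ^ c)%N.
Proof.
move=> r_ge2 large.
have step n : (4 * n + 5 <= r.-1 * r ^ n)%N -> (4 * n.+1 + 5 <= r.-1 * r ^ n.+1)%N.
  by rewrite expnS mulnCA; nia.
case/orP: large => [r_ge6|c_ge5].
  by elim: c => [|c /step //]; rewrite muln1; lia.
rewrite -(subnK c_ge5); elim: (c - 5)%N => [|n /step //].
rewrite add0n; apply: leq_trans (leq_pmull _ _); last by rewrite -ltnS prednK // ltnW.
by apply: (@leq_trans (2 ^ 5)); rewrite ?leq_exp2r.
Qed.

Lemma main_term_dominates_large r k : (2 <= r)%N -> (6 <= r)%N || (11 <= k)%N ->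
  main_term_dominates r k.
Proof.
move=> r_ge2 large; rewrite /main_term_dominates.
have k_le : (k <= (uphalf k).*2)%N by rewrite -leq_uphalf_double.
apply: leq_trans (linear_le_exp r _ r_ge2 _); first lia.
case/orP: large => [->//|k_ge11]; apply/orP; right.
have : (6 <= uphalf k)%N by rewrite geq_uphalf_double.
lia.
Qed.

(* A form of [witt_numer] that evaluates by conversion. *)
Lemma witt_numerE r k : witt_numer r k =
  \sum_(d <- divisors k)
     (if all (fun p => prime p ==> ~~ (p * p %| d)%N) (iota 0 d.+1)
      then (-1) ^+ size (primes d) else 0) * (r ^ (k %/ d))%N%:Z.
Proof.
apply: eq_bigr => d _; congr (_ * _); rewrite /moebius; congr (if _ then _ else _).
apply/forallP/allP => [H p|H p]; last by apply: H; rewrite mem_iota ltn_ord.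
by rewrite mem_iota => /andP[_ pd]; apply: (H (Ordinal pd)).
Qed.

Lemma milnor_gt0_small r k : (2 <= r <= 5)%N -> (2 <= k <= 10)%N ->
  ~~ main_term_dominates r k -> ~ (r = 2%N /\ k \in [:: 2; 4; 6]%N) ->
  0 < milnor r k.
Proof.
move=> /andP[r_ge2 r_le5] /andP[k_ge2 k_le10] not_dom not_exc.
apply: milnor_gt0_of_numer; first exact: ltnW.
have table : all (fun r => all (fun k => [|| main_term_dominates r k,
    (r == 2%N) && (k \in [:: 2; 4; 6]%N) |
    k%:Z * witt_numer r k.+1 < (k.+1 * r)%N%:Z * witt_numer r k])
    (iota 2 9)) (iota 2 4).
  under eq_all => r' do under eq_all => k' do rewrite !witt_numerE.
  by rewrite unlock.
have r_in : r \in iota 2 4 by rewrite mem_iota; lia.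
have k_in : k \in iota 2 9 by rewrite mem_iota; lia.
move: table => /allP/(_ r r_in)/allP/(_ k k_in).
rewrite (negbTE not_dom) /= => /orP[/andP[/eqP r2 k_exc]|//].
by case: not_exc.
Qed.

Theorem lemma2p5 (r k : nat) (hr : (2 <= r)%N) (hk : (2 <= k)%N) :
  ~ (r = 2%N /\ k \in [:: 2; 4; 6]%N) -> 0 < milnor r k.
Proof.
move=> not_exc; have k_gt0 : (0 < k)%N by exact: ltnW.
have [|not_dom] := boolP (main_term_dominates r k).
  exact: milnor_gt0_of_dominance.
have small : (r <= 5)%N && (k <= 10)%N.
  apply: contraNT not_dom; rewrite negb_and -!ltnNge.
  exact: main_term_dominates_large.
by case/andP: small => r_le5 k_le10; apply: milnor_gt0_small; rewrite ?hr ?hk.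
Qed.
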